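(* Let $D$ be an integral domain and let $S$ be a splitting multiplicative subset of $D$ generated by prime elements. Then $D$ is a completely atomic domain (resp., a RIDF-domain, a U-FFD) if and only if $D_S$ is a completely atomic domain (resp., a RIDF-domain, a U-FFD).
   Context: A multiplicative subset $S$ of $D$ is generated by primes if $S=\{u p_1\cdots p_n: u\in U(D),\ p_i\in P,\ n\ge0\}$ for some set $P$ of prime elements of $D$. A saturated multiplicative subset $S$ of $D$ is splitting if each $x\in D$ can be written as $x=as$ with $a\in D$, $s\in S$, such that $aD\cap tD=atD$ for all $t\in S$. An atom (irreducible element) is a nonzero nonunit $a$ such that $a=bc$ implies $b$ or $c$ is a unit; a nonzero nonunit is atomic if it is a finite product of atoms. A domain is completely atomic if every nonunit divisor of an atomic element is atomic. A domain is a RIDF-domain if every atomic element has only finitely many pairwise nonassociate irreducible divisors. A domain is a U-FFD if every atomic element has only finitely many factorizations into irreducibles (up to order and associates). *)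

From HB Require Import structures.
From mathcomp Require Import all_boot all_order all_algebra fraction.
Set Implicit Arguments. Unset Strict Implicit. Unset Printing Implicit Defensive.
Import GRing.Theory.
Local Open Scope ring_scope.

(* Factorization notions relative to a subring A (given as a predicate) of an
   integral domain K.  For D itself we take A = wholeD (everything); for the
   localization D_S we take the subring of {fraction D} of elements a/s. *)
Section Rel.
Variables (K : idomainType) (A : K -> Prop).

Definition unitIn (u : K) : Prop := A u /\ exists v, A v /\ u * v = 1.
Definition dvdIn (a b : K) : Prop := exists c, A c /\ b = a * c.
Definition assocIn (a b : K) : Prop := exists u, unitIn u /\ b = a * u.

Definition atomIn (a : K) : Prop :=
  [/\ A a, a != 0, ~ unitIn a &
      forall b c, A b -> A c -> a = b * c -> unitIn b \/ unitIn c].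

Definition factorizationIn (x : K) (l : seq K) : Prop :=
  (forall a, a \in l -> atomIn a) /\ x = \prod_(a <- l) a.

Definition atomicIn (x : K) : Prop :=
  [/\ A x, x != 0, ~ unitIn x & exists l, factorizationIn x l].

Fixpoint Forall2P (l1 l2 : seq K) : Prop :=
  match l1, l2 with
  | [::], [::] => True
  | a :: r1, b :: r2 => assocIn a b /\ Forall2P r1 r2
  | _, _ => False
  end.

Definition fact_equivIn (l1 l2 : seq K) : Prop :=
  exists l, perm_eq l l2 /\ Forall2P l1 l.

Definition completely_atomicIn : Prop :=
  forall x d, atomicIn x -> A d -> ~ unitIn d -> dvdIn d x -> atomicIn d.

(* finitely many pairwise nonassociate irreducible divisors *)
Definition RIDFIn : Prop :=
  forall x, atomicIn x -> exists L : seq K,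
    forall a, atomIn a -> dvdIn a x -> exists2 b, b \in L & assocIn a b.

(* finitely many factorizations up to order and associates *)
Definition UFFDIn : Prop :=
  forall x, atomicIn x -> exists LL : seq (seq K),
    forall l, factorizationIn x l -> exists2 l', l' \in LL & fact_equivIn l l'.
End Rel.

Section Dom.
Variable (D : idomainType).

Definition wholeD : D -> Prop := fun _ => True.

Definition primeD (p : D) : Prop :=
  [/\ p != 0, p \notin GRing.unit &
      forall a b, dvdIn wholeD p (a * b) -> dvdIn wholeD p a \/ dvdIn wholeD p b].

Definition generated_by_primes (S : pred D) : Prop :=
  exists P : pred D, (forall p, p \in P -> primeD p) /\
    forall x, x \in S <-> exists u (l : seq D),
      [/\ u \in GRing.unit, all (fun p => p \in P) l & x = u * \prod_(p <- l) p].

Definition saturated_mult (S : pred D) : Prop :=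
  [/\ 1 \in S, forall a b, a \in S -> b \in S -> a * b \in S
    & forall a b, a * b \in S -> a \in S /\ b \in S].

Definition splitting (S : pred D) : Prop :=
  saturated_mult S /\
  forall x, exists a s, [/\ s \in S, x = a * s &
    forall t, t \in S -> forall y,
      (dvdIn wholeD a y /\ dvdIn wholeD t y) <-> dvdIn wholeD (a * t) y].

(* D_S as the subring {a/s : a in D, s in S} of the fraction field of D *)
Definition locS (S : pred D) : {fraction D} -> Prop :=
  fun z => exists a s, s \in S /\ z = FracField.tofrac a / FracField.tofrac s.
End Dom.

(* Every nonzero x of D is x = a s with s in S and a S-free (divisible by no prime of P); this
   is unique up to units, and an S-free a divides c t with t in S only if it divides c.  Hence an
   atom of D is either S-free or associate to a prime of P, the S-free atoms of D are exactly the
   elements whose images are atoms of D_S, and every element of D_S is a unit times the image of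
   an S-free element.  So factorizations in D_S are, up to units, the factorizations of S-free
   parts in D, while a factorization of x = a s in D consists of a factorization of a (up to a
   unit) and of atoms associate to primes of a fixed factorization of s, no more of them than
   there are such primes.  Each property transfers along this dictionary; for U-FFDs one uses
   that an atomic element has finitely many factorizations iff their lengths are bounded and
   their atoms lie, up to associates, in a finite set. *)

From mathcomp Require Import all_boot all_order all_algebra fraction.
From mathcomp Require Import ring.
From Stdlib Require Import Classical.
Set Implicit Arguments. Unset Strict Implicit. Unset Printing Implicit Defensive.
Import GRing.Theory.
Local Open Scope ring_scope.

Section FactorizationIn.
Variables (K : idomainType) (A : K -> Prop).
Hypotheses (A1 : A 1) (AM : forall x y, A x -> A y -> A (x * y)).

Lemma unitIn1 : unitIn A 1.
Proof. by split=> //; exists 1; rewrite mulr1. Qed.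

Lemma unitInM u v : unitIn A u -> unitIn A v -> unitIn A (u * v).
Proof.
move=> [Au [u' [Au' uu']]] [Av [v' [Av' vv']]]; split; first exact: AM.
by exists (v' * u'); split; [exact: AM | rewrite mulrA -(mulrA u) vv' mulr1].
Qed.

Lemma unitIn_inv u : unitIn A u -> exists2 v, unitIn A v & u * v = 1.
Proof.
move=> [Au [v [Av uv]]]; exists v => //; split=> //.
by exists u; rewrite mulrC.
Qed.

Lemma unitIn_neq0 u : unitIn A u -> u != 0.
Proof.
by move=> [_ [v [_ uv]]]; apply/eqP => u0; move/eqP: uv; rewrite u0 mul0r eq_sym oner_eq0.
Qed.

Lemma nonunitInMr x u : A x -> unitIn A u -> ~ unitIn A x -> ~ unitIn A (x * u).
Proof.
move=> Ax [Au _] nUx [_ [w [Aw xuw]]]; apply: nUx; split=> //.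
by exists (u * w); split; [exact: AM | rewrite mulrA].
Qed.

Lemma assocIn_refl a : assocIn A a a.
Proof. by exists 1; split; [exact: unitIn1 | rewrite mulr1]. Qed.

Lemma assocIn_sym a b : assocIn A a b -> assocIn A b a.
Proof.
move=> [u [Uu ->]]; have [v Uv uv] := unitIn_inv Uu.
by exists v; split=> //; rewrite -mulrA uv mulr1.
Qed.

Lemma assocIn_trans a b c : assocIn A a b -> assocIn A b c -> assocIn A a c.
Proof.
move=> [u [Uu ->]] [v [Uv ->]]; exists (u * v).
by split; [exact: unitInM | rewrite mulrA].
Qed.

Lemma assocIn_mulr_unit a u : unitIn A u -> assocIn A (a * u) a.
Proof. by move=> Uu; apply: assocIn_sym; exists u. Qed.

Lemma assocIn_dvd a b : assocIn A a b -> dvdIn A a b.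
Proof. by move=> [u [[Au _] ->]]; exists u. Qed.

Lemma dvdIn_trans a b c : dvdIn A a b -> dvdIn A b c -> dvdIn A a c.
Proof.
move=> [x [Ax ->]] [y [Ay ->]]; exists (x * y).
by split; [exact: AM | rewrite mulrA].
Qed.

Lemma dvdIn_assoc a a' b b' :
  assocIn A a a' -> assocIn A b b' -> dvdIn A a b -> dvdIn A a' b'.
Proof.
move=> aa' bb' ab; apply: dvdIn_trans (assocIn_dvd bb').
exact: dvdIn_trans (assocIn_dvd (assocIn_sym aa')) ab.
Qed.

Lemma atomInMr a u : atomIn A a -> unitIn A u -> atomIn A (a * u).
Proof.
move=> [Aa a0 nUa irr] Uu; have [v Uv uv] := unitIn_inv Uu.
split; first exact: AM (proj1 Uu).
- by rewrite mulf_neq0 // unitIn_neq0.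
- exact: nonunitInMr.
move=> b c Ab Ac auE; have Acv : A (c * v) by apply: AM => //; case: Uv.
have : a = b * (c * v) by rewrite mulrA -auE -mulrA uv mulr1.
case/(irr _ _ Ab Acv) => [Ub | Ucv]; [by left | right].
by have := unitInM Ucv Uu; rewrite -mulrA [v * u]mulrC uv mulr1.
Qed.

Lemma prod_atomIn_neq0 (l : seq K) : {in l, forall a, atomIn A a} -> \prod_(a <- l) a != 0.
Proof. by move=> atoms; rewrite prodf_seq_neq0; apply/allP => a /atoms []. Qed.

Lemma Forall2P_refl l : Forall2P A l l.
Proof. by elim: l => //= a l IHl; split=> //; exact: assocIn_refl. Qed.

Lemma Forall2P_trans l1 l2 l3 : Forall2P A l1 l2 -> Forall2P A l2 l3 -> Forall2P A l1 l3.
Proof.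
elim: l1 l2 l3 => [|a l1 IHl] [|b l2] [|c l3] //= [ab l12] [bc l23].
by split; [exact: assocIn_trans bc | exact: IHl l23].
Qed.

Lemma Forall2P_size l1 l2 : Forall2P A l1 l2 -> size l1 = size l2.
Proof. by elim: l1 l2 => [|a l1 IHl] [|b l2] //= [_ /IHl ->]. Qed.

Lemma Forall2P_mem l1 l2 a : Forall2P A l1 l2 -> a \in l1 -> exists2 b, b \in l2 & assocIn A a b.
Proof.
elim: l1 l2 => [|c l1 IHl] [|b l2] //= [cb l12]; rewrite in_cons => /predU1P [-> | al1].
  by exists b; rewrite ?mem_head.
by have [b' b'l2 ab'] := IHl _ l12 al1; exists b'; rewrite // in_cons b'l2 orbT.
Qed.

Lemma factorizationIn_mulr_unit (l : seq K) u : unitIn A u -> {in l, forall a, atomIn A a} ->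
  l != [::] -> exists2 l', factorizationIn A (\prod_(a <- l) a * u) l' & Forall2P A l l'.
Proof.
case: l => [|b l] // Uu atoms _; exists (b * u :: l); last first.
  by split; [exists u | exact: Forall2P_refl].
split; last by rewrite !big_cons mulrAC.
move=> c; rewrite in_cons => /predU1P [-> | cl]; last by apply: atoms; rewrite in_cons cl orbT.
by apply: atomInMr => //; apply: atoms; rewrite mem_head.
Qed.

Lemma atomicIn_prod_mulr_unit x (l : seq K) u : A x -> ~ unitIn A x -> unitIn A u ->
  {in l, forall a, atomIn A a} -> x = \prod_(a <- l) a * u -> atomicIn A x.
Proof.
move=> Ax nUx Uu atoms xE; have l0 : l != [::].
  by apply: contra_notN nUx => /eqP l0; rewrite xE l0 big_nil mul1r.
have [l' fact_l' _] := factorizationIn_mulr_unit Uu atoms l0.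
split=> //; last by exists l'; rewrite xE.
by rewrite xE mulf_neq0 ?prod_atomIn_neq0 ?unitIn_neq0.
Qed.

Lemma atomicInMr x u : atomicIn A x -> unitIn A u -> atomicIn A (x * u).
Proof.
move=> [Ax _ nUx [l [atoms xE]]] Uu.
apply: (atomicIn_prod_mulr_unit _ _ Uu atoms); rewrite -?xE //.
- exact: AM (proj1 Uu).
- exact: nonunitInMr.
Qed.

Definition bounded_factorizationsIn (x : K) := exists (C : seq K) (N : nat),
  forall l, factorizationIn A x l ->
  (size l <= N)%N /\ {in l, forall a, exists2 c, c \in C & assocIn A a c}.

Fixpoint seqs_upto (C : seq K) (n : nat) : seq (seq K) :=
  if n is n'.+1 then [::] :: [seq c :: t | c <- C, t <- seqs_upto C n'] else [:: [::]].

Lemma mem_seqs_upto (C t : seq K) n : {subset t <= C} -> (size t <= n)%N -> t \in seqs_upto C n.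
Proof.
elim: n t => [|n IHn] [|c t] //= tC tn; rewrite ?mem_head // in_cons.
apply/orP; right; apply: (allpairs_f (fun c t => c :: t)).
  by apply: tC; rewrite mem_head.
by apply: IHn => // a at_; apply: tC; rewrite in_cons at_ orbT.
Qed.

Lemma Forall2P_representatives (C l : seq K) :
  {in l, forall a, exists2 c, c \in C & assocIn A a c} ->
  exists2 k, Forall2P A l k & {subset k <= C}.
Proof.
elim: l => [|a l IHl] reps; first by exists [::].
have [|k lk kC] := IHl; first by move=> b bl; apply: reps; rewrite in_cons bl orbT.
have [c cC ac] := reps a (mem_head _ _).
by exists (c :: k) => // d; rewrite in_cons => /predU1P [-> | /kC].
Qed.

Lemma UFFDIn_bounded : UFFDIn A <-> forall x, atomicIn A x -> bounded_factorizationsIn x.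
Proof.
split=> [uffd x /uffd [LL LLP] | bounded x /bounded [C [N CNP]]].
  exists (flatten LL), (sumn (map size LL)) => l /LLP [k kLL [k' [k'k lk']]].
  split.
    rewrite (Forall2P_size lk') (perm_size k'k).
    elim: LL kLL {LLP} => [|m LL IHLL] //=; rewrite in_cons => /predU1P [-> | /IHLL].
      exact: leq_addr.
    by move/leq_trans; apply; exact: leq_addl.
  move=> a al; have [b bk' ab] := Forall2P_mem lk' al; exists b => //.
  by apply/flattenP; exists k; rewrite // -(perm_mem k'k).
exists (seqs_upto C N) => l fact_l; have [sizel reps] := CNP l fact_l.
have [k lk kC] := Forall2P_representatives reps.
exists k; last by exists k; split.
by apply: mem_seqs_upto; rewrite // -(Forall2P_size lk).
Qed.

End FactorizationIn.

Section SplittingSetGeneratedByPrimes.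
Variables (D : idomainType) (S P : pred D).
Hypotheses (P_prime : forall p, p \in P -> primeD p)
  (S_generated : forall x, x \in S <-> exists u (l : seq D),
      [/\ u \in GRing.unit, all (fun p => p \in P) l & x = u * \prod_(p <- l) p])
  (S_splitting : forall x, exists a s, [/\ s \in S, x = a * s &
    forall t, t \in S -> forall y,
      (dvdIn (@wholeD D) a y /\ dvdIn (@wholeD D) t y) <-> dvdIn (@wholeD D) (a * t) y]).

Local Notation inD := (@wholeD D).
Local Notation dvd := (dvdIn inD).

Lemma wholeD1 : inD 1. Proof. by []. Qed.
Lemma wholeDM x y : inD x -> inD y -> inD (x * y). Proof. by []. Qed.

Lemma dvdDP a b : dvd a b <-> exists c, b = a * c.
Proof. by split=> [[c [_ ->]] | [c ->]]; exists c. Qed.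

Lemma dvdD_mulIl a c : dvd a (a * c). Proof. by exists c. Qed.

Lemma dvdDnn a : dvd a a. Proof. by exists 1; rewrite mulr1. Qed.

Lemma dvdD_trans a b c : dvd a b -> dvd b c -> dvd a c.
Proof. exact: dvdIn_trans. Qed.

Lemma dvdD_mull a b c : dvd a b -> dvd a (c * b).
Proof. by move=> /dvdDP [d ->]; rewrite mulrCA; apply: dvdD_mulIl. Qed.

Lemma dvdD_prod q (l : seq D) : q \in l -> dvd q (\prod_(b <- l) b).
Proof. by move=> ql; rewrite (big_rem _ ql); apply: dvdD_mulIl. Qed.

Lemma dvdD_unit a u : dvd a u -> u \is a GRing.unit -> a \is a GRing.unit.
Proof. by move=> /dvdDP [c ->]; rewrite unitrM => /andP []. Qed.

Lemma unitInD u : unitIn inD u <-> u \is a GRing.unit.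
Proof.
split=> [[_ [v [_ uv]]] | /unitrPr [v uv]]; first by apply/unitrPr; exists v.
by split=> //; exists v.
Qed.

Lemma assocInD a b : assocIn inD a b <-> exists2 u, u \is a GRing.unit & b = a * u.
Proof. by split=> [[u [/unitInD Uu ->]] | [u /unitInD Uu ->]]; exists u. Qed.

Lemma dvdD_anti a b : a != 0 -> dvd a b -> dvd b a -> assocIn inD a b.
Proof.
move=> a0 /dvdDP [c bE] /dvdDP [d aE]; apply/assocInD; exists c => //.
by apply/unitrPr; exists d; apply: (mulfI a0); rewrite mulrA -bE -aE mulr1.
Qed.

Lemma atomD_dvd q p : atomIn inD q -> p \isn't a GRing.unit -> dvd p q -> assocIn inD p q.
Proof.
move=> [_ _ _ irr] nUp /dvdDP [c qE]; apply/assocInD; exists c => //.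
by case: (irr p c I I qE) => /unitInD // Up; rewrite Up in nUp.
Qed.

Lemma P_neq0 p : p \in P -> p != 0. Proof. by case/P_prime. Qed.

Lemma P_nonunit p : p \in P -> p \isn't a GRing.unit. Proof. by case/P_prime. Qed.

Lemma P_dvdM p a b : p \in P -> dvd p (a * b) -> dvd p a \/ dvd p b.
Proof. by case/P_prime => _ _; apply. Qed.

Lemma P_dvd_prod p (l : seq D) :
  p \in P -> dvd p (\prod_(q <- l) q) -> exists2 q, q \in l & dvd p q.
Proof.
move=> pP; elim: l => [|q l IHl]; rewrite ?big_nil ?big_cons.
  by move/dvdD_unit; rewrite unitr1 (negPf (P_nonunit pP)) => /(_ isT).
case/(P_dvdM pP) => [pq | /IHl [r rl pr]]; first by exists q; rewrite ?mem_head.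
by exists r; rewrite // in_cons rl orbT.
Qed.

Lemma P_atom p : p \in P -> atomIn inD p.
Proof.
move=> pP; split=> //; [exact: P_neq0 | by move/unitInD; apply/negP; exact: P_nonunit |].
move=> b c _ _ pE; have p0 := P_neq0 pP.
have : dvd p (b * c) by rewrite -pE; apply: dvdDnn.
case/(P_dvdM pP) => /dvdDP [d dE]; [right | left]; apply/unitInD/unitrPr; exists d.
  by apply: (mulfI p0); rewrite mulr1 [RHS]pE dE -mulrA [d * c]mulrC.
by apply: (mulfI p0); rewrite mulr1 [RHS]pE dE mulrCA.
Qed.

Lemma S_unit u : u \is a GRing.unit -> u \in S.
Proof. by move=> Uu; apply/S_generated; exists u, [::]; rewrite big_nil mulr1. Qed.

Lemma S1 : 1 \in S. Proof. exact/S_unit/unitr1. Qed.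

Lemma S_P p : p \in P -> p \in S.
Proof.
move=> pP; apply/S_generated; exists 1, [:: p].
by rewrite unitr1 /= pP big_seq1 mul1r.
Qed.

Lemma S_mul s t : s \in S -> t \in S -> s * t \in S.
Proof.
move=> /S_generated [u [l [Uu lP ->]]] /S_generated [v [k [Uv kP ->]]].
apply/S_generated; exists (u * v), (l ++ k).
by rewrite unitrM Uu Uv all_cat lP kP big_cat /=; split=> //; ring.
Qed.

Lemma S_prod (l : seq D) : {subset l <= S} -> \prod_(q <- l) q \in S.
Proof.
by move=> lS; rewrite big_seq; apply: (big_ind (fun x => x \in S)); [exact: S1 | exact: S_mul |].
Qed.

Lemma S_neq0 s : s \in S -> s != 0.
Proof.
move=> /S_generated [u [l [Uu lP ->]]]; rewrite mulf_neq0 ?prodf_seq_neq0 //.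
  by apply: contraTneq Uu => ->; rewrite unitr0.
by apply/allP => p /(allP lP) /P_neq0.
Qed.

Definition Sfree (a : D) := a != 0 /\ forall p, p \in P -> ~ dvd p a.

Lemma Sfree_dvd a b : Sfree a -> dvd b a -> Sfree b.
Proof.
move=> [a0 aP] ba; split=> [|p pP pb]; last exact: aP pP (dvdD_trans pb ba).
by apply: contra_neq a0 => b0; move/dvdDP: ba => [c ->]; rewrite b0 mul0r.
Qed.

Lemma SfreeM a b : Sfree a -> Sfree b -> Sfree (a * b).
Proof.
move=> [a0 aP] [b0 bP]; split=> [|p pP]; first by rewrite mulf_neq0.
by case/(P_dvdM pP); [exact: aP | exact: bP].
Qed.

Lemma Sfree_unit u : u \is a GRing.unit -> Sfree u.
Proof.
move=> Uu; split=> [|p pP /dvdD_unit/(_ Uu)]; last by apply/negP; exact: P_nonunit.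
by apply: contraTneq Uu => ->; rewrite unitr0.
Qed.

Lemma Sfree_prod (l : seq D) : {in l, forall q, Sfree q} -> Sfree (\prod_(q <- l) q).
Proof.
move=> lfree; rewrite big_seq.
by apply: (big_ind Sfree); [exact/Sfree_unit/unitr1 | exact: SfreeM |].
Qed.

Lemma Sfree_decomp x : x != 0 -> exists a s, [/\ Sfree a, s \in S & x = a * s].
Proof.
move=> x0; have [a [s [sS xE splits]]] := S_splitting x; exists a, s; split=> //.
have a0 : a != 0 by apply: contra_neq x0 => a0; rewrite xE a0 mul0r.
split=> // p pP pa.
have /dvdDP [c aE] : dvd (a * p) a by apply/(splits p (S_P pP)); split=> //; exact: dvdDnn.
move/negP: (P_nonunit pP); apply; apply/unitrPr; exists c.
by apply: (mulfI a0); rewrite mulr1 mulrA -aE.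
Qed.

Lemma Sfree_dvdMS a c t : Sfree a -> t \in S -> dvd a (c * t) -> dvd a c.
Proof.
move=> [a0 aP] /S_generated [u [l [Uu lP ->]]].
elim: l c lP => [|p l IHl] c /=.
  rewrite big_nil mulr1 => _ /dvdDP [d cuE]; apply/dvdDP; exists (d * u^-1).
  by rewrite mulrA -cuE mulrK.
move=> /andP [pP lP]; rewrite big_cons (mulrCA u) (mulrA c) => /(IHl _ lP) /dvdDP [d cpE].
have : dvd p (a * d) by rewrite -cpE; apply: dvdD_mull; exact: dvdDnn.
case/(P_dvdM pP) => [/(aP p pP) // | /dvdDP [e dE]].
apply/dvdDP; exists e; apply: (mulIf (P_neq0 pP)).
by rewrite cpE dE mulrCA mulrC.
Qed.

Lemma Sfree_dvdS a s : Sfree a -> s \in S -> dvd a s -> a \is a GRing.unit.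
Proof.
move=> afree sS; rewrite -[s]mul1r => /(Sfree_dvdMS afree sS).
by move/dvdD_unit; apply; exact: unitr1.
Qed.

Lemma Sfree_decomp_uniq a b s t : Sfree a -> Sfree b -> s \in S -> t \in S ->
  a * s = b * t -> assocIn inD a b.
Proof.
move=> afree bfree sS tS ab; apply: dvdD_anti; first by case: afree.
  by apply: (Sfree_dvdMS afree tS); rewrite -ab; apply: dvdD_mulIl.
by apply: (Sfree_dvdMS bfree sS); rewrite ab; apply: dvdD_mulIl.
Qed.

Lemma atomD_Sfree_or_S q : atomIn inD q -> Sfree q \/ q \in S.
Proof.
move=> [_ q0 _ irr]; have [a [s [afree sS qE]]] := Sfree_decomp q0.
case: (irr a s) => // /unitInD Ua; [right | left]; rewrite qE.
  by apply: S_mul => //; exact: S_unit.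
by apply: SfreeM => //; exact: Sfree_unit.
Qed.

Lemma atomD_S_assoc_P q : atomIn inD q -> q \in S -> exists2 p, p \in P & assocIn inD p q.
Proof.
move=> qatom /S_generated [u [[|p l] [Uu lP qE]]].
  by case: qatom => _ _ nUq _; exfalso; apply/nUq/unitInD; rewrite qE big_nil mulr1.
move: lP => /= /andP [pP _]; exists p => //; apply: atomD_dvd (P_nonunit pP) _ => //.
by rewrite qE big_cons mulrCA; apply: dvdD_mulIl.
Qed.

Lemma S_atom_dvd_SfreeM q a u (ps : seq D) : atomIn inD q -> q \in S -> Sfree a ->
  u \is a GRing.unit -> all (fun p => p \in P) ps ->
  dvd q (a * (u * \prod_(p <- ps) p)) -> exists2 p', p' \in ps & assocIn inD q p'.
Proof.
move=> qatom qS [_ aP] Uu psP qdvd.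
have [p pP pq] := atomD_S_assoc_P qatom qS.
have : dvd p (a * (u * \prod_(p <- ps) p)) by exact: dvdD_trans (assocIn_dvd pq) qdvd.
case/(P_dvdM pP) => [/(aP p pP) // |].
case/(P_dvdM pP) => [/dvdD_unit /(_ Uu) | /(P_dvd_prod pP) [p' p'ps pp']].
  by rewrite (negPf (P_nonunit pP)).
exists p' => //; apply: assocIn_trans (assocIn_sym pq) _ => //.
exact: atomD_dvd (P_atom (allP psP _ p'ps)) (P_nonunit pP) pp'.
Qed.

Lemma size_S_atoms_dvd (l ps : seq D) : {in l, forall q, atomIn inD q /\ q \in S} ->
  all (fun p => p \in P) ps -> dvd (\prod_(q <- l) q) (\prod_(p <- ps) p) ->
  (size l <= size ps)%N.
Proof.
elim: l ps => [|q l IHl] ps lS psP //; rewrite big_cons => qldvd.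
have [qatom qS] := lS q (mem_head _ _).
have [p pP pq] := atomD_S_assoc_P qatom qS.
have : dvd p (\prod_(p <- ps) p).
  by apply: dvdD_trans (assocIn_dvd pq) (dvdD_trans (dvdD_mulIl _ _) qldvd).
case/(P_dvd_prod pP) => p' p'ps pp'.
have /assocInD [c Uc p'E] : assocIn inD q p'.
  exact: assocIn_trans (assocIn_sym pq) (atomD_dvd (P_atom (allP psP _ p'ps)) (P_nonunit pP) pp').
rewrite (perm_size (perm_to_rem p'ps)) /= ltnS; apply: IHl.
- by move=> r rl; apply: lS; rewrite in_cons rl orbT.
- by apply/allP => r /mem_rem; exact: (allP psP).
move: qldvd; rewrite (big_rem _ p'ps) /= {1}p'E -mulrA => /dvdDP [k kE].
have cremE : c * \prod_(r <- rem p' ps) r = \prod_(r <- l) r * k.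
  by apply: (mulfI (S_neq0 qS)); rewrite kE mulrA.
by apply/dvdDP; exists (c^-1 * k); rewrite mulrCA -cremE mulKr.
Qed.

Lemma atomsD_partition (l : seq D) : {in l, forall q, atomIn inD q} ->
  exists lf lp, [/\ perm_eq l (lf ++ lp), {in lf, forall q, Sfree q /\ atomIn inD q}
    & {in lp, forall q, atomIn inD q /\ q \in S}].
Proof.
elim: l => [|q l IHl] atoms; first by exists [::], [::].
have [|lf [lp [lE lfP lpP]]] := IHl; first by move=> r rl; apply: atoms; rewrite in_cons rl orbT.
have qatom := atoms q (mem_head _ _).
case: (atomD_Sfree_or_S qatom) => [qfree | qS].
  exists (q :: lf), lp; split; first by rewrite /= perm_cons.
    by move=> r; rewrite in_cons => /predU1P [-> | /lfP].
  exact: lpP.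
exists lf, (q :: lp); split=> //; last by move=> r; rewrite in_cons => /predU1P [-> | /lpP].
by rewrite perm_sym (perm_catCA lf [:: q] lp (q :: l)) /= perm_cons perm_sym.
Qed.

Lemma factorizationD_split x l a s : factorizationIn inD x l -> x = a * s -> Sfree a -> s \in S ->
  exists lf lp, [/\ perm_eq l (lf ++ lp), {in lf, forall q, Sfree q /\ atomIn inD q},
    {in lp, forall q, atomIn inD q /\ q \in S},
    exists2 w, w \is a GRing.unit & a = \prod_(q <- lf) q * w
    & exists2 w, w \is a GRing.unit & s = \prod_(q <- lp) q * w].
Proof.
move=> [atoms xE] xas afree sS.
have [lf [lp [lE lfP lpP]]] := atomsD_partition atoms.
have lfree : Sfree (\prod_(q <- lf) q) by apply: Sfree_prod => q /lfP [].
have lS : \prod_(q <- lp) q \in S by apply: S_prod => q /lpP [].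
have /assocInD [w Uw aE] : assocIn inD (\prod_(q <- lf) q) a.
  by apply: (Sfree_decomp_uniq lfree afree lS sS); rewrite -xas xE (perm_big _ lE) big_cat.
exists lf, lp; split=> //; first by exists w.
exists w^-1; rewrite ?unitrV //; apply: (mulfI (proj1 afree)).
by rewrite -xas xE (perm_big _ lE) big_cat /= aE mulrACA mulrV // mulr1.
Qed.

Lemma atomicD_mulS a t : a \is a GRing.unit \/ atomicIn inD a -> t \in S ->
  ~ unitIn inD (a * t) -> atomicIn inD (a * t).
Proof.
move=> aunit_or_atomic /S_generated [u [ps [Uu psP ->]]] nUat.
have [lb [w [lbatoms Uw aE]]] : exists lb w, [/\ {in lb, forall b, atomIn inD b},
    w \is a GRing.unit & a = \prod_(b <- lb) b * w].
  case: aunit_or_atomic => [Ua | [_ _ _ [lb [lbatoms aE]]]].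
    by exists [::], a; split; rewrite ?big_nil ?mul1r.
  by exists lb, 1; split; rewrite ?mulr1 ?unitr1.
apply: (atomicIn_prod_mulr_unit wholeD1 wholeDM _ nUat (l := lb ++ ps) (u := w * u)) => //.
- by apply/unitInD; rewrite unitrM Uw Uu.
- move=> b; rewrite mem_cat => /orP [/lbatoms // | bps].
  exact: P_atom (allP psP _ bps).
- by rewrite big_cat /= aE; ring.
Qed.

Lemma atomicD_Sfree_part x a s : atomicIn inD x -> x = a * s -> Sfree a -> s \in S ->
  a \is a GRing.unit \/ atomicIn inD a.
Proof.
move=> [_ _ _ [l fact_l]] xas afree sS.
have [lf [_ [_ lfP _ [w Uw aE] _]]] := factorizationD_split fact_l xas afree sS.
case: (boolP (a \is a GRing.unit)) => [|nUa]; [by left | right].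
apply: (atomicIn_prod_mulr_unit wholeD1 wholeDM _ _ _ _ aE) => //.
- by move/unitInD; apply/negP.
- exact/unitInD.
- by move=> q /lfP [].
Qed.

Local Notation "x %:F" := (@FracField.tofrac D x).
Local Notation inDS := (locS S).

Lemma eq_locS_frac x s y t : s \in S -> t \in S -> x%:F / s%:F = y%:F / t%:F -> x * t = y * s.
Proof.
move=> sS tS /eqP; rewrite eqr_div ?tofrac_eq0 ?S_neq0 // -!tofracM tofrac_eq.
exact/eqP.
Qed.

Lemma locS_tofrac x : inDS x%:F.
Proof. by exists x, 1; rewrite S1 tofrac1 divr1. Qed.

Lemma locS1 : inDS 1.
Proof. by rewrite -tofrac1; apply: locS_tofrac. Qed.

Lemma locSM y z : inDS y -> inDS z -> inDS (y * z).
Proof.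
move=> [x [s [sS ->]]] [x' [s' [s'S ->]]]; exists (x * x'), (s * s').
by rewrite mulf_div -!tofracM S_mul.
Qed.

Lemma unitS_frac s t : s \in S -> t \in S -> unitIn inDS (s%:F / t%:F).
Proof.
move=> sS tS; split; first by exists s, t.
exists (t%:F / s%:F); split; first by exists t, s.
by rewrite mulf_div [t%:F * _]mulrC divff // mulf_neq0 ?tofrac_eq0 ?S_neq0.
Qed.

Lemma unitS_tofrac u : u \is a GRing.unit -> unitIn inDS u%:F.
Proof.
by move=> Uu; rewrite -[u%:F]divr1 -tofrac1; apply: unitS_frac; [exact: S_unit | exact: S1].
Qed.

Lemma locS_decomp z : inDS z -> z != 0 -> exists a v, [/\ Sfree a, unitIn inDS v & z = a%:F * v].
Proof.
move=> [x [s [sS zE]]] z0.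
have x0 : x != 0 by apply: contra_neq z0 => x0; rewrite zE x0 tofrac0 mul0r.
have [a [t [afree tS xE]]] := Sfree_decomp x0.
exists a, (t%:F / s%:F); split=> //; first exact: unitS_frac.
by rewrite zE xE tofracM mulrA.
Qed.

Lemma unitS_Sfree a : Sfree a -> unitIn inDS a%:F -> a \is a GRing.unit.
Proof.
move=> afree [_ [v [[c [t [tS ->]]] av1]]].
have : (a * c)%:F / t%:F = 1%:F / 1%:F by rewrite tofracM -mulrA av1 tofrac1 divr1.
move/eq_locS_frac => /(_ tS S1); rewrite mulr1 mul1r => act.
by apply: (Sfree_dvdS afree tS); rewrite -act; apply: dvdD_mulIl.
Qed.

Lemma dvdS_tofrac a b : Sfree a -> dvdIn inDS a%:F b%:F <-> dvd a b.
Proof.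
move=> afree; split=> [[v [[c [t [tS ->]]] bE]] | /dvdDP [c ->]]; last first.
  by exists c%:F; rewrite tofracM; split=> //; exact: locS_tofrac.
have : b%:F / 1%:F = (a * c)%:F / t%:F by rewrite tofrac1 divr1 tofracM -mulrA.
move/eq_locS_frac => /(_ S1 tS); rewrite mulr1 => btE.
by apply: (Sfree_dvdMS afree tS); rewrite btE; apply: dvdD_mulIl.
Qed.

Lemma assocS_tofrac a b : assocIn inD a b -> assocIn inDS a%:F b%:F.
Proof.
by move/assocInD => [u Uu ->]; exists u%:F; rewrite tofracM; split=> //; exact: unitS_tofrac.
Qed.

Lemma assocS_Sfree a b : Sfree a -> Sfree b -> assocIn inDS a%:F b%:F -> assocIn inD a b.
Proof.
move=> afree bfree ab; apply: dvdD_anti; first by case: afree.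
  exact/(dvdS_tofrac _ afree)/assocIn_dvd.
exact/(dvdS_tofrac _ bfree)/assocIn_dvd/assocIn_sym.
Qed.

Lemma atomS_tofrac a : Sfree a -> atomIn inDS a%:F <-> atomIn inD a.
Proof.
move=> afree; split=> [[_ _ nUa irr] | [_ a0 nUa irr]].
  split=> //; first by case: afree.
    by move/unitInD/unitS_tofrac.
  move=> b c _ _ aE.
  have bfree : Sfree b by apply: Sfree_dvd afree _; rewrite aE; apply: dvdD_mulIl.
  have cfree : Sfree c by apply: Sfree_dvd afree _; rewrite aE mulrC; apply: dvdD_mulIl.
  case: (irr b%:F c%:F (locS_tofrac b) (locS_tofrac c)); first by rewrite aE tofracM.
    by move/(unitS_Sfree bfree)/unitInD; left.
  by move/(unitS_Sfree cfree)/unitInD; right.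
split; [exact: locS_tofrac | by rewrite tofrac_eq0 | by move/(unitS_Sfree afree)/unitInD |].
move=> y z y_loc z_loc aE.
have /andP [y0 z0] : (y != 0) && (z != 0) by rewrite -negb_or -mulf_eq0 -aE tofrac_eq0.
have [b [v [bfree Uv yE]]] := locS_decomp y_loc y0.
have [c [w [cfree Uw zE]]] := locS_decomp z_loc z0.
have /assocInD [u Uu abcE] : assocIn inD (b * c) a.
  apply: assocS_Sfree (SfreeM bfree cfree) afree _; exists (v * w).
  by split; [exact: (unitInM locSM Uv Uw) | rewrite aE yE zE tofracM mulrACA].
case: (irr b (c * u) I I); first by rewrite abcE mulrA.
  by move/unitInD => Ub; left; rewrite yE; exact: (unitInM locSM (unitS_tofrac Ub) Uv).
rewrite unitInD unitrM => /andP [Uc _]; right.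
by rewrite zE; exact: (unitInM locSM (unitS_tofrac Uc) Uw).
Qed.

Lemma unitS_decomp z a v : Sfree a -> unitIn inDS v -> z = a%:F * v ->
  unitIn inDS z <-> a \is a GRing.unit.
Proof.
move=> afree Uv ->; split=> [Uav | Ua]; last exact: (unitInM locSM (unitS_tofrac Ua) Uv).
have [w Uw vw] := unitIn_inv Uv; apply: unitS_Sfree afree _.
by have := unitInM locSM Uav Uw; rewrite -mulrA vw mulr1.
Qed.

Lemma atomS_decomp y : atomIn inDS y ->
  exists b v, [/\ Sfree b, atomIn inD b, unitIn inDS v & y = b%:F * v].
Proof.
move=> yatom; have [y_loc y0 _ _] := yatom.
have [b [v [bfree Uv yE]]] := locS_decomp y_loc y0.
have [w Uw vw] := unitIn_inv Uv.
exists b, v; split=> //; apply/(atomS_tofrac bfree).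
by have := atomInMr locSM yatom Uw; rewrite yE -mulrA vw mulr1.
Qed.

Lemma Forall2P_tofrac l1 l2 :
  Forall2P inD l1 l2 -> Forall2P inDS [seq x%:F | x <- l1] [seq x%:F | x <- l2].
Proof.
elim: l1 l2 => [|a l1 IHl] [|b l2] //= [ab l12].
by split; [exact: assocS_tofrac | exact: IHl].
Qed.

Lemma factorizationS_tofrac a l : Sfree a -> factorizationIn inD a l ->
  factorizationIn inDS a%:F [seq b%:F | b <- l].
Proof.
move=> afree [atoms aE]; split; last by rewrite big_map -rmorph_prod -aE.
move=> _ /mapP [b bl ->]; apply/atomS_tofrac; last exact: atoms.
by apply: Sfree_dvd afree _; rewrite aE; apply: dvdD_prod.
Qed.

Lemma atomsS_prod_decomp (l : seq {fraction D}) : {in l, forall y, atomIn inDS y} ->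
  exists lb, [/\ {in lb, forall b, Sfree b /\ atomIn inD b},
    Forall2P inDS l [seq b%:F | b <- lb]
    & exists2 v, unitIn inDS v & \prod_(y <- l) y = (\prod_(b <- lb) b)%:F * v].
Proof.
elim: l => [|y l IHl] atoms.
  by exists [::]; split=> //; exists 1; rewrite ?big_nil ?tofrac1 ?mulr1 //; exact: (unitIn1 locS1).
have [|lb [lbP llb [v Uv lE]]] := IHl; first by move=> z zl; apply: atoms; rewrite in_cons zl orbT.
have [b [u [bfree batom Uu yE]]] := atomS_decomp (atoms y (mem_head _ _)).
exists (b :: lb); split.
- by move=> c; rewrite in_cons => /predU1P [-> | /lbP].
- by split=> //; rewrite yE; exact: assocIn_mulr_unit.
exists (u * v); first exact: (unitInM locSM Uu Uv).
by rewrite !big_cons lE yE tofracM mulrACA.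
Qed.

Lemma factorizationS_Sfree a v l : Sfree a -> a \isn't a GRing.unit -> unitIn inDS v ->
  factorizationIn inDS (a%:F * v) l ->
  exists2 lb, factorizationIn inD a lb & Forall2P inDS l [seq b%:F | b <- lb].
Proof.
move=> afree nUa Uv [atoms lE].
have [lb [lbP llb [w Uw lbE]]] := atomsS_prod_decomp atoms.
have lbfree : Sfree (\prod_(b <- lb) b) by apply: Sfree_prod => b /lbP [].
have /assocInD [u Uu aE] : assocIn inD (\prod_(b <- lb) b) a.
  apply: assocS_Sfree lbfree afree _; have [v' Uv' vv'] := unitIn_inv Uv.
  exists (w * v'); split; first exact: (unitInM locSM Uw Uv').
  by rewrite mulrA -lbE -lE -mulrA vv' mulr1.
have lb0 : lb != [::] by apply: contraNneq nUa => lb0; rewrite aE lb0 big_nil mul1r.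
have lbatoms : {in lb, forall b, atomIn inD b} by move=> b /lbP [].
have [lb' fact_lb' lblb'] :=
  factorizationIn_mulr_unit wholeD1 wholeDM (proj2 (unitInD u) Uu) lbatoms lb0.
exists lb'; first by rewrite aE.
exact: (Forall2P_trans locSM llb (Forall2P_tofrac lblb')).
Qed.

Lemma atomicS_tofrac a : Sfree a -> atomicIn inDS a%:F <-> atomicIn inD a.
Proof.
move=> afree; split=> [[_ a0 nUa [l fact_l]] | [_ a0 nUa [l fact_l]]].
  have nUaD : a \isn't a GRing.unit by apply: contra_notN nUa; exact: unitS_tofrac.
  have [|lb fact_lb _] := factorizationS_Sfree afree nUaD (unitIn1 locS1) (l := l).
    by rewrite mulr1.
  split=> //; [by case: afree | by move/unitInD; apply/negP | by exists lb].
split; [exact: locS_tofrac | by rewrite tofrac_eq0 | |].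
  by move/(unitS_Sfree afree)/unitInD.
by exists [seq b%:F | b <- l]; exact: factorizationS_tofrac.
Qed.

Lemma atomicS_decomp z a v : Sfree a -> unitIn inDS v -> z = a%:F * v ->
  atomicIn inDS z <-> atomicIn inD a.
Proof.
move=> afree Uv ->; rewrite -atomicS_tofrac //; split=> [|/(atomicInMr locS1 locSM)]; last exact.
have [w Uw vw] := unitIn_inv Uv.
by move/(atomicInMr locS1 locSM) => /(_ w Uw); rewrite -mulrA vw mulr1.
Qed.

Lemma dvdS_decomp a b u v : Sfree b -> unitIn inDS u -> unitIn inDS v ->
  dvdIn inDS (b%:F * u) (a%:F * v) -> dvd b a.
Proof.
move=> bfree Uu Uv.
by move/(dvdIn_assoc locSM (assocIn_mulr_unit _ Uu) (assocIn_mulr_unit _ Uv))/(dvdS_tofrac _ bfree).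
Qed.

Lemma Sfree_representatives (L : seq {fraction D}) : exists LD : seq D,
  forall y b, y \in L -> Sfree b -> assocIn inDS y b%:F -> exists2 c, c \in LD & assocIn inD b c.
Proof.
elim: L => [|y0 L [LD LDP]]; first by exists [::].
case: (classic (exists2 b0, Sfree b0 & assocIn inDS y0 b0%:F)) => [[b0 b0free y0b0] | no_rep].
  exists (b0 :: LD) => y b; rewrite in_cons => /predU1P [-> bfree y0b | yL bfree yb].
    exists b0; first exact: mem_head.
    by apply: assocS_Sfree bfree b0free _; exact: (assocIn_trans locSM (assocIn_sym y0b) y0b0).
  by have [c cLD bc] := LDP y b yL bfree yb; exists c; rewrite // in_cons cLD orbT.
exists LD => y b; rewrite in_cons => /predU1P [-> bfree y0b | yL]; last exact: LDP.
by case: no_rep; exists b.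
Qed.

Lemma completely_atomic_locS : completely_atomicIn inD -> completely_atomicIn inDS.
Proof.
move=> caD z w zatomic w_loc nUw wz; have [z_loc z0 _ _] := zatomic.
have w0 : w != 0 by apply: contra_neq z0 => w0; case: wz => c [_ ->]; rewrite w0 mul0r.
have [a [v [afree Uv zE]]] := locS_decomp z_loc z0.
have [b [u [bfree Uu wE]]] := locS_decomp w_loc w0.
apply/(atomicS_decomp bfree Uu wE); apply: (caD a) => //.
- exact/(atomicS_decomp afree Uv zE).
- by move/unitInD/(unitS_decomp bfree Uu wE).
by apply: (dvdS_decomp bfree Uu Uv); rewrite -wE -zE.
Qed.

Lemma completely_atomic_of_locS : completely_atomicIn inDS -> completely_atomicIn inD.
Proof.
move=> caS x d xatomic _ nUd dx; have [_ x0 _ _] := xatomic.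
have d0 : d != 0 by apply: contra_neq x0 => d0; move/dvdDP: dx => [c ->]; rewrite d0 mul0r.
have [a [s [afree sS xE]]] := Sfree_decomp x0.
have [b [t [bfree tS dE]]] := Sfree_decomp d0.
rewrite dE in nUd *; apply: atomicD_mulS tS nUd.
case: (boolP (b \is a GRing.unit)) => [|nUb]; [by left | right].
have ba : dvd b a.
  apply: (Sfree_dvdMS bfree sS); rewrite -xE; apply: dvdD_trans dx.
  by rewrite dE; apply: dvdD_mulIl.
have [Ua | aatomic] := atomicD_Sfree_part xatomic xE afree sS.
  by rewrite (dvdD_unit ba Ua) in nUb.
apply/(atomicS_tofrac bfree); apply: (caS a%:F).
- exact/atomicS_tofrac.
- exact: locS_tofrac.
- by move/(unitS_Sfree bfree); apply/negP.
- exact/dvdS_tofrac.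
Qed.

Lemma RIDF_locS : RIDFIn inD -> RIDFIn inDS.
Proof.
move=> ridfD z zatomic; have [z_loc z0 _ _] := zatomic.
have [a [v [afree Uv zE]]] := locS_decomp z_loc z0.
have [L LP] := ridfD a (proj1 (atomicS_decomp afree Uv zE) zatomic).
exists [seq c%:F | c <- L] => y yatom yz.
have [b [u [bfree batom Uu yE]]] := atomS_decomp yatom.
have [c cL bc] : exists2 c, c \in L & assocIn inD b c.
  by apply: LP _ batom (dvdS_decomp bfree Uu Uv _); rewrite -yE -zE.
exists c%:F; first exact: map_f.
by rewrite yE; exact: (assocIn_trans locSM (assocIn_mulr_unit _ Uu) (assocS_tofrac bc)).
Qed.

Lemma RIDF_Sfree_part a : RIDFIn inDS -> Sfree a -> a \is a GRing.unit \/ atomicIn inD a ->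
  exists LD : seq D, forall q, atomIn inD q -> dvd q a -> exists2 c, c \in LD & assocIn inD q c.
Proof.
move=> ridfS afree [Ua | aatomic].
  by exists [::] => q [_ _ nUq _] /dvdD_unit /(_ Ua) /unitInD.
have [L LP] := ridfS _ (proj2 (atomicS_tofrac afree) aatomic).
have [LD LDP] := Sfree_representatives L.
exists LD => q qatom qa; have qfree := Sfree_dvd afree qa.
have [y yL qy] := LP _ (proj2 (atomS_tofrac qfree) qatom) (proj2 (dvdS_tofrac _ qfree) qa).
exact: LDP yL qfree (assocIn_sym qy).
Qed.

Lemma RIDF_of_locS : RIDFIn inDS -> RIDFIn inD.
Proof.
move=> ridfS x xatomic; have [_ x0 _ _] := xatomic.
have [a [s [afree sS xE]]] := Sfree_decomp x0.
have [u [ps [Uu psP sE]]] := (S_generated s).1 sS.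
have [LD LDP] := RIDF_Sfree_part ridfS afree (atomicD_Sfree_part xatomic xE afree sS).
exists (LD ++ ps) => q qatom qx.
case: (atomD_Sfree_or_S qatom) => [qfree | qS].
  have [c cLD qc] : exists2 c, c \in LD & assocIn inD q c.
    by apply: LDP qatom (Sfree_dvdMS qfree sS _); rewrite -xE.
  by exists c; rewrite // mem_cat cLD.
have [p pps qp] : exists2 p, p \in ps & assocIn inD q p.
  by apply: S_atom_dvd_SfreeM qatom qS afree Uu psP _; rewrite -sE -xE.
by exists p; rewrite // mem_cat pps orbT.
Qed.

Lemma bounded_factorizations_locS :
    (forall x, atomicIn inD x -> bounded_factorizationsIn inD x) ->
  forall z, atomicIn inDS z -> bounded_factorizationsIn inDS z.
Proof.
move=> bfD z zatomic; have [z_loc z0 nUz _] := zatomic.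
have [a [v [afree Uv zE]]] := locS_decomp z_loc z0.
have nUa : a \isn't a GRing.unit by apply: contra_notN nUz => /(unitS_decomp afree Uv zE).
have [C [N CNP]] := bfD a (proj1 (atomicS_decomp afree Uv zE) zatomic).
exists [seq c%:F | c <- C], N => l; rewrite zE.
move=> /(factorizationS_Sfree afree nUa Uv) [lb fact_lb llb].
have [sizelb lbC] := CNP lb fact_lb.
split; first by rewrite (Forall2P_size llb) size_map.
move=> y yl; have [_ /mapP [b blb ->] yb] := Forall2P_mem llb yl.
have [c cC bc] := lbC b blb.
by exists c%:F; [exact: map_f | exact: (assocIn_trans locSM yb (assocS_tofrac bc))].
Qed.

(* Products up to a unit are what factorizationD_split yields for the S-free part. *)
Lemma bounded_factorizations_Sfree_part a :
    (forall z, atomicIn inDS z -> bounded_factorizationsIn inDS z) ->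
    Sfree a -> a \is a GRing.unit \/ atomicIn inD a ->
  exists (CD : seq D) (N : nat), forall lf w, {in lf, forall q, atomIn inD q} ->
    w \is a GRing.unit -> a = \prod_(q <- lf) q * w ->
    (size lf <= N)%N /\ {in lf, forall q, exists2 c, c \in CD & assocIn inD q c}.
Proof.
move=> bfS afree [Ua | aatomic].
  exists [::], 0%N => -[|q lf] // w atoms _ aE; have [_ _ nUq _] := atoms q (mem_head _ _).
  by case: nUq; apply/unitInD/(dvdD_unit _ Ua); rewrite aE big_cons -mulrA; apply: dvdD_mulIl.
have [C [N CNP]] := bfS _ (proj2 (atomicS_tofrac afree) aatomic).
have [CD CDP] := Sfree_representatives C.
exists CD, N => lf w atoms Uw aE.
have lffree : {in lf, forall q, Sfree q}.
  move=> q ql; apply: Sfree_dvd afree _; rewrite aE.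
  exact: dvdD_trans (dvdD_prod ql) (dvdD_mulIl _ w).
have lfFatoms : {in [seq q%:F | q <- lf], forall y, atomIn inDS y}.
  by move=> _ /mapP [q ql ->]; apply/atomS_tofrac; [exact: lffree | exact: atoms].
have lfF0 : [seq q%:F | q <- lf] != [::].
  case: aatomic aE => _ _ nUa _; case: (lf) => // aE.
  by case: nUa; apply/unitInD; rewrite aE big_nil mul1r.
have [l fact_l lfl] := factorizationIn_mulr_unit locS1 locSM (unitS_tofrac Uw) lfFatoms lfF0.
rewrite big_map -rmorph_prod -tofracM -aE in fact_l; have [sizel lC] := CNP l fact_l.
split; first by rewrite -(size_map (@FracField.tofrac D)) (Forall2P_size lfl).
move=> q ql; have [y yl qy] := Forall2P_mem lfl (map_f _ ql).
have [c' c'C yc'] := lC y yl.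
exact: CDP c'C (lffree q ql) (assocIn_sym (assocIn_trans locSM qy yc')).
Qed.

Lemma bounded_factorizations_of_locS :
    (forall z, atomicIn inDS z -> bounded_factorizationsIn inDS z) ->
  forall x, atomicIn inD x -> bounded_factorizationsIn inD x.
Proof.
move=> bfS x xatomic; have [_ x0 _ _] := xatomic.
have [a [s [afree sS xE]]] := Sfree_decomp x0.
have [u [ps [Uu psP sE]]] := (S_generated s).1 sS.
have [CD [N CNP]] :=
  bounded_factorizations_Sfree_part bfS afree (atomicD_Sfree_part xatomic xE afree sS).
exists (CD ++ ps), (N + size ps)%N => l fact_l.
have [lf [lp [lE lfP lpP [w Uw aE] [w' Uw' sE']]]] := factorizationD_split fact_l xE afree sS.
have [sizelf lfCD] := CNP lf w (fun q ql => (lfP q ql).2) Uw aE.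
split.
  rewrite (perm_size lE) size_cat leq_add //; apply: size_S_atoms_dvd lpP psP _.
  by apply/dvdDP; exists (w' * u^-1); rewrite mulrA -sE' sE [u * _]mulrC mulrK.
move=> q ql; have : q \in lf ++ lp by rewrite -(perm_mem lE).
rewrite mem_cat => /orP [/lfCD [c cCD qc] | qlp].
  by exists c; rewrite // mem_cat cCD.
have [qatom qS] := lpP q qlp.
have [p pps qp] : exists2 p, p \in ps & assocIn inD q p.
  apply: S_atom_dvd_SfreeM qatom qS afree Uu psP _; rewrite -sE -xE.
  by case: fact_l => _ ->; apply: dvdD_prod.
by exists p; rewrite // mem_cat pps orbT.
Qed.

End SplittingSetGeneratedByPrimes.

Theorem proposition3p3 (D : idomainType) (S : pred D) :
  generated_by_primes S -> splitting S ->
  [/\ completely_atomicIn (@wholeD D) <-> completely_atomicIn (locS S),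
      RIDFIn (@wholeD D) <-> RIDFIn (locS S)
    & UFFDIn (@wholeD D) <-> UFFDIn (locS S)].
Proof.
move=> [P [P_prime S_generated]] [_ S_splitting].
split; last rewrite !UFFDIn_bounded; split.
- exact: completely_atomic_locS P_prime S_generated S_splitting.
- exact: completely_atomic_of_locS P_prime S_generated S_splitting.
- exact: RIDF_locS P_prime S_generated S_splitting.
- exact: RIDF_of_locS P_prime S_generated S_splitting.
- exact: bounded_factorizations_locS P_prime S_generated S_splitting.
- exact: bounded_factorizations_of_locS P_prime S_generated S_splitting.
Qed.
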